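(* Let $\Omega\subset\mathbb{R}^d$ be a bounded open set, $q\ge1$ an integer, $\lambda\in\mathbb{R}\setminus\{0\}$, $k\in C^q(\overline{\Omega}\times\overline{\Omega})$ and $f\in C^q(\overline{\Omega})$ nonzero. Suppose $\lambda$ does not belong to the spectrum of $\mathcal{K}\colon C^0(\overline{\Omega})\to C^0(\overline{\Omega})$, $(\mathcal{K}v)(x)=\int_\Omega k(x,y)v(y)\,dy$, and let $u\in C^q(\overline{\Omega})$ be the solution of $\lambda u-\mathcal{K}u=f$. Let $\{(Y_h,\vec w_h)\}_{h>0}$ be a quadrature scheme of order $q$ which is stable. Then for all sufficiently small $h>0$ the linear system \[ \lambda\hat u_{h,i}-\sum_{j=1}^{|Y_h|}w_{h,j}k(y_{h,i},y_{h,j})\hat u_{h,j}=f(y_{h,i}),\quad i=1,\dots,|Y_h|, \] has a unique solution, the condition number of its system matrix $\lambda I_h-K_hW_h$ is bounded uniformly with respect to $h$, and there is a constant $C>0$ independent of $h$ and $u$ such that \[ \|u-u_h\|_\infty\le C h^q\|u\|_{C^q(\overline{\Omega})},\qquad\text{where } u_h(x)=\frac1\lambda\Big(\sum_{i=1}^{|Y_h|}w_{h,i}k(x,y_{h,i})\hat u_{h,i}+f(x)\Big). \]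
   Context: $C^q(\overline{\Omega})$ is the space of functions whose partial derivatives up to order $q$ exist on $\Omega$ and extend continuously to $\overline{\Omega}$, with norm $\|v\|_{C^q(\overline{\Omega})}=\sum_{|\alpha|\le q}\frac1{\alpha!}\max_{\overline\Omega}|\partial^\alpha v|$; $\|v\|_\infty=\max_{\overline\Omega}|v|$. A quadrature scheme is a family $\{(Y_h,\vec w_h)\}_{h>0}$ of finite sets $Y_h=\{y_{h,i}\}\subset\overline{\Omega}$ and weights $\vec w_h\in\mathbb{R}^{|Y_h|}$ with $|Y_h|\to\infty$ as $h\to0^+$. It has order $q$ if there is $C_w$ with $|\int_\Omega v-\sum_i w_{h,i}v(y_{h,i})|\le C_wh^q\|v\|_{C^q(\overline{\Omega})}$ for all $h>0$ and $v\in C^q(\overline{\Omega})$; it is stable if $\|\vec w_h\|_1\le C_Q$ for all $h>0$. $I_h$ is the identity of size $|Y_h|$, $(K_h)_{ij}=k(y_{h,i},y_{h,j})$, $W_h=\mathrm{diag}(\vec w_h)$. *)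

From HB Require Import structures.
From mathcomp Require Import all_boot all_order all_algebra.
From mathcomp Require Import all_classical all_reals all_analysis.
Set Implicit Arguments. Unset Strict Implicit. Unset Printing Implicit Defensive.
Import Order.TTheory GRing.Theory Num.Theory.
Import numFieldNormedType.Exports.
Local Open Scope classical_set_scope.
Local Open Scope ring_scope.

Section Defs.
Variable R : realType.

Definition pdiff (n : nat) (i : 'I_n) (f : 'rV[R]_n -> R) : 'rV[R]_n -> R :=
  fun x => 'D_(delta_mx 0 i) f x.

Definition Dseq (n : nat) (s : seq 'I_n) (f : 'rV[R]_n -> R) : 'rV[R]_n -> R :=
  foldr (@pdiff n) f s.

(* multi-indices alpha with entries <= q ; alpha is admissible if |alpha| <= q *)
Definition mindex (n q : nat) := {ffun 'I_n -> 'I_q.+1}.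
Definition mabs (n q : nat) (a : mindex n q) : nat := (\sum_(i < n) (a i : nat))%N.
Definition mfact (n q : nat) (a : mindex n q) : nat := (\prod_(i < n) (a i)`!)%N.
Definition mseq (n q : nat) (a : mindex n q) : seq 'I_n :=
  flatten [seq nseq (a i) i | i <- enum 'I_n].
Definition pderiv (n q : nat) (a : mindex n q) (f : 'rV[R]_n -> R) := Dseq (mseq a) f.

(* v is in C^q(closure A): v is continuous on closure A, all partial
   derivatives of order <= q exist on A and extend continuously to closure A. *)
Definition Cq (n q : nat) (A : set 'rV[R]_n) (v : 'rV[R]_n -> R) : Prop :=
  {within closure A, continuous v} /\
  (forall s : seq 'I_n, (size s < q)%N -> forall (i : 'I_n) x, A x ->
      derivable (Dseq s v) x (delta_mx 0 i)) /\
  (forall s : seq 'I_n, (size s <= q)%N -> exists g : 'rV[R]_n -> R,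
      {within closure A, continuous g} /\ forall x, A x -> g x = Dseq s v x).

(* ||v||_{C^q}: sum over |alpha| <= q of (1/alpha!) max_{closure A} |d^alpha v|.
   The max over closure A of the continuous extension equals the sup over A. *)
Definition Cq_norm (n q : nat) (A : set 'rV[R]_n) (v : 'rV[R]_n -> R) : R :=
  \sum_(a : mindex n q | (mabs a <= q)%N)
     ((mfact a)%:R^-1 * sup [set `|pderiv a v x| | x in A]).

Definition supnorm (n : nat) (A : set 'rV[R]_n) (v : 'rV[R]_n -> R) : R :=
  sup [set `|v x| | x in closure A].

Fixpoint iint (n : nat) : ('rV[R]_n -> R) -> R :=
  match n return ('rV[R]_n -> R) -> R with
  | 0 => fun f => f 0
  | n'.+1 => fun f =>
      Rintegral (@lebesgue_measure R) setT
        (fun t : R => iint (fun x : 'rV[R]_n' => f (row_mx (t%:M : 'rV[R]_1) x)))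
  end.

Definition integral_on (n : nat) (A : set 'rV[R]_n) (g : 'rV[R]_n -> R) : R :=
  iint (fun y => \1_A y * g y).

Definition Kop (d : nat) (Om : set 'rV[R]_d) (k : 'rV[R]_d -> 'rV[R]_d -> R)
  (v : 'rV[R]_d -> R) : 'rV[R]_d -> R :=
  fun x => integral_on Om (fun y => k x y * v y).

Definition prodset (d : nat) (Om : set 'rV[R]_d) : set 'rV[R]_(d + d) :=
  [set z | Om (lsubmx z) /\ Om (rsubmx z)].
Definition kfun2 (d : nat) (k : 'rV[R]_d -> 'rV[R]_d -> R) : 'rV[R]_(d + d) -> R :=
  fun z => k (lsubmx z) (rsubmx z).

(* lam is NOT in the spectrum of K : C^0(closure Om) -> C^0(closure Om), i.e.
   lam I - K is a bijection of C^0(closure Om) with bounded inverse. *)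
Definition not_in_spectrum (d : nat) (Om : set 'rV[R]_d)
  (k : 'rV[R]_d -> 'rV[R]_d -> R) (lam : R) : Prop :=
  (forall g, {within closure Om, continuous g} ->
     exists v, {within closure Om, continuous v} /\
       forall x, closure Om x -> lam * v x - Kop Om k v x = g x) /\
  (forall v, {within closure Om, continuous v} ->
     (forall x, closure Om x -> lam * v x - Kop Om k v x = 0) ->
     forall x, closure Om x -> v x = 0) /\
  (exists M : R, forall v, {within closure Om, continuous v} ->
     supnorm Om v <= M * supnorm Om (fun x => lam * v x - Kop Om k v x)).

(* For h > 0: nodes y h i (i < N h), forming the finite set Y_h of
   cardinality N h (the nodes are pairwise distinct), and weights w h i. *)
Definition quad_scheme (d : nat) (Om : set 'rV[R]_d) (N : R -> nat)
  (y : forall h : R, 'I_(N h) -> 'rV[R]_d) : Prop :=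
  (forall h, 0 < h -> forall i, closure Om (y h i)) /\
  (forall h, 0 < h -> injective (y h)) /\
  (forall M : nat, exists delta : R, 0 < delta /\
      forall h, 0 < h < delta -> (M <= N h)%N).

Definition quad_order (d : nat) (Om : set 'rV[R]_d) (q : nat) (N : R -> nat)
  (y : forall h : R, 'I_(N h) -> 'rV[R]_d) (w : forall h : R, 'I_(N h) -> R) : Prop :=
  exists Cw : R, forall h, 0 < h -> forall v, Cq q Om v ->
    `|integral_on Om v - \sum_(i < N h) w h i * v (y h i)|
      <= Cw * h ^+ q * Cq_norm q Om v.

Definition quad_stable (N : R -> nat) (w : forall h : R, 'I_(N h) -> R) : Prop :=
  exists CQ : R, forall h, 0 < h -> \sum_(i < N h) `|w h i| <= CQ.

Definition mxnorm_inf (m : nat) (A : 'M[R]_m) : R :=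
  \big[Num.max/0]_(i < m) \sum_(j < m) `|A i j|.
Definition cond_inf (m : nat) (A : 'M[R]_m) : R :=
  mxnorm_inf A * mxnorm_inf (invmx A).

Definition sysmx (d : nat) (k : 'rV[R]_d -> 'rV[R]_d -> R) (lam : R) (N : R -> nat)
  (y : forall h : R, 'I_(N h) -> 'rV[R]_d) (w : forall h : R, 'I_(N h) -> R)
  (h : R) : 'M[R]_(N h) :=
  lam%:M - (\matrix_(i, j) k (y h i) (y h j)) *m diag_mx (\row_j w h j).

Definition nystrom (d : nat) (k : 'rV[R]_d -> 'rV[R]_d -> R) (lam : R) (N : R -> nat)
  (y : forall h : R, 'I_(N h) -> 'rV[R]_d) (w : forall h : R, 'I_(N h) -> R)
  (f : 'rV[R]_d -> R) (h : R) (uh : 'I_(N h) -> R) : 'rV[R]_d -> R :=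
  fun x => lam^-1 * (\sum_(i < N h) w h i * k x (y h i) * uh i + f x).

End Defs.

(* For node values v let phi(x) = lam^-1 sum_j w_j k(x, y_j) v_j.  Then
   v_i = phi(y_i) + lam^-1 (L_h v)_i, where L_h is the operator of the linear
   system, and (lam - K) phi(x) equals lam^-1 sum_i w_i k(x, y_i) (L_h v)_i up
   to the quadrature error for k(x, .) phi.  That error is O(h^q |v|_oo) since
   the derivatives of order <= q of k(x, .) and k(., y) are bounded uniformly
   for x, y in the closure of Omega (at boundary points by a mean value
   argument).  Stability of lam - K on C^0 thus gives
   |v|_oo <= C |L_h v|_oo + C' h^q |v|_oo, hence invertibility and a bound on
   the inverse as soon as C' h^q <= 1/2.  For v = u(y) - u_h the residual L_h v
   is the quadrature error for k(y_i, .) u, and u - u_h is expressed through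
   the same two quantities, which gives the error estimate. *)

From HB Require Import structures.
From mathcomp Require Import all_boot all_order all_algebra.
From mathcomp Require Import all_classical all_reals all_analysis.
From mathcomp Require Import ring lra.
Import Order.TTheory GRing.Theory Num.Theory.
Import numFieldNormedType.Exports.
Local Open Scope classical_set_scope.
Local Open Scope ring_scope.
Set Implicit Arguments. Unset Strict Implicit. Unset Printing Implicit Defensive.

Section WithinContinuity.
Context {R : realType} {T : topologicalType} (B : set T).

Lemma within_continuousM (f g : T -> R) :
  {within B, continuous f} -> {within B, continuous g} ->
  {within B, continuous (fun z => f z * g z)}.
Proof. by move=> cf cg x; apply: cvgM; [exact: cf|exact: cg]. Qed.

Lemma within_continuous_sum (I : Type) (r : seq I) (F : I -> T -> R) :
  (forall m, {within B, continuous (F m)}) ->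
  {within B, continuous (fun z => \sum_(m <- r) F m z)}.
Proof. by move=> cF x; apply: cvg_big => // [|m _]; [exact: add_continuous|exact: cF]. Qed.

End WithinContinuity.

Section BoundedSets.
Context {R : realType} {n : nat}.

Lemma bounded_setP (A : set 'rV[R]_n) :
  bounded_set A <-> exists2 M, 0 <= M & forall x, A x -> `|x| <= M.
Proof.
split=> [bA|[M _ AM]].
  have bA' : \forall M \near +oo, forall x, A x -> `|x| <= M := bA.
  have [M [AM M0]] := filter_ex (filterI bA' (nbhs_pinfty_ge (num_real (0 : R)))).
  by exists M.
rewrite /= /bounded_near; near=> M' => x Ax; apply: le_trans (AM x Ax) _.
by near: M'; apply: nbhs_pinfty_ge; exact: num_real.
Unshelve. all: by end_near.
Qed.

Lemma bounded_closure (A : set 'rV[R]_n) : bounded_set A -> bounded_set (closure A).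
Proof.
move=> /bounded_setP[M M0 AM]; apply/bounded_setP; exists (M + 1) => [|x Ax].
  exact: addr_ge0.
have [a [Aa /= xa]] := Ax _ (nbhsx_ballx x 1 ltr01).
rewrite -(subrK a x); apply: le_trans (ler_normD _ _) _; rewrite addrC.
by apply: lerD (AM a Aa) _; move: xa; rewrite -ball_normE /= distrC => /ltW.
Qed.

Lemma within_continuous_bounded (A : set 'rV[R]_n) (g : 'rV[R]_n -> R) :
  bounded_set A -> {within closure A, continuous g} ->
  exists2 M, 0 <= M & forall x, closure A x -> `|g x| <= M.
Proof.
move=> bA cg; have cA : compact (closure A).
  by apply: bounded_closed_compact; [exact: bounded_closure|exact: closed_closure].
have bg : \forall M \near +oo, forall r, (g @` closure A) r -> `|r| <= M.
  exact: compact_bounded (continuous_compact cg cA).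
have [M [gM M0]] := filter_ex (filterI bg (nbhs_pinfty_ge (num_real (0 : R)))).
by exists M => // x Ax; apply: gM; exists x.
Qed.

End BoundedSets.

Section SupOfNorms.
Context {R : realType} {T : Type} (A : set T) (g : T -> R).

Lemma sup_norm_ge0 : 0 <= sup [set `|g x| | x in A].
Proof.
have [hs|/sup_out->//] := pselect (has_sup [set `|g x| | x in A]).
have [[_ [x Ax _]] _] := hs.
by apply: le_trans (normr_ge0 (g x)) _; apply: sup_upper_bound => //; exists x.
Qed.

Lemma sup_norm_le c : 0 <= c -> (forall x, A x -> `|g x| <= c) ->
  sup [set `|g x| | x in A] <= c.
Proof.
move=> c0 gc; have [->|/set0P[x Ax]] := eqVneq A set0; first by rewrite image_set0 sup0.
by apply: ge_sup => [|_ [z Az <-]]; [exists `|g x|, x|exact: gc].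
Qed.

Lemma le_sup_norm M z : (forall x, A x -> `|g x| <= M) -> A z ->
  `|g z| <= sup [set `|g x| | x in A].
Proof.
move=> gM Az; apply: sup_upper_bound; last by exists z.
by split; [exists `|g z|, z|exists M => _ [x Ax <-]; exact: gM].
Qed.

End SupOfNorms.

Lemma is_derive_big {R : realType} {V : normedModType R} (I : Type) (r : seq I)
    (F : I -> V -> R) (dF : I -> R) x v :
  (forall m, is_derive x v (F m) (dF m)) ->
  is_derive x v (fun z => \sum_(m <- r) F m z) (\sum_(m <- r) dF m).
Proof.
move=> FD; rewrite -fct_sumE.
by elim/big_ind2: _ => //; [exact: is_derive_cst|move=> *; exact: is_deriveD].
Qed.

Fixpoint masks (n : nat) : seq bitseq :=
  if n is n'.+1 then map (cons true) (masks n') ++ map (cons false) (masks n')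
  else [:: [::]].

Lemma size_masks n : size (masks n) = (2 ^ n)%N.
Proof. by elim: n => //= n IH; rewrite size_cat !size_map IH expnS mul2n addnn. Qed.

Section DerivativeTower.
Context {R : realType} (n q : nat) (A : set 'rV[R]_n).
Hypothesis Aop : open A.

Definition derivative_tower (f : 'rV[R]_n -> R) (D : seq 'I_n -> 'rV[R]_n -> R) :=
  (forall x, A x -> f x = D [::] x) /\
  (forall s, (size s < q)%N -> forall i x, A x ->
     is_derive x (delta_mx 0 i) (D s) (D (i :: s) x)).

Lemma Dseq_tower f D : derivative_tower f D ->
  forall s, (size s <= q)%N -> forall x, A x -> Dseq s f x = D s x.
Proof.
case=> f0 fD; elim=> [|i s IH] /= sq x Ax; first exact: f0.
have Dnear : {near x, Dseq s f =1 D s}.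
  by near=> z; apply: IH; [exact: ltnW|near: z; exact: Aop].
by rewrite /pdiff (near_eq_derive _ Dnear); exact: (derive_val (is_derive := fD s sq i x Ax)).
Unshelve. all: by end_near.
Qed.

Lemma derivable_Dseq_tower f D : derivative_tower f D ->
  forall s, (size s < q)%N -> forall i x, A x -> derivable (Dseq s f) x (delta_mx 0 i).
Proof.
move=> fD s sq i x Ax.
have Dnear : {near x, D s =1 Dseq s f}.
  by near=> z; rewrite (Dseq_tower fD) //; [exact: ltnW|near: z; exact: Aop].
by apply: near_eq_derivable Dnear _; have := fD.2 s sq i x Ax.
Unshelve. all: by end_near.
Qed.

Lemma Cq_tower f : Cq q A f -> derivative_tower f (fun s => Dseq s f).
Proof. by case=> _ [fD _]; split=> // s sq i x Ax; exact/derivableP/fD. Qed.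

Lemma Cq_of_tower f D : derivative_tower f D -> {within closure A, continuous f} ->
  (forall s, (size s <= q)%N -> exists g,
     {within closure A, continuous g} /\ forall x, A x -> g x = D s x) ->
  Cq q A f.
Proof.
move=> fD cf Dext; split=> //; split; first exact: derivable_Dseq_tower fD.
move=> s sq; have [g [cg gD]] := Dext s sq; exists g; split=> // x Ax.
by rewrite gD // (Dseq_tower fD).
Qed.

Lemma Cq_extensions v : Cq q A v -> exists E : seq 'I_n -> 'rV[R]_n -> R,
  forall s, (size s <= q)%N ->
    {within closure A, continuous (E s)} /\ forall x, A x -> E s x = Dseq s v x.
Proof.
case=> _ [_ vext].
suff /choice[E HE] : forall s, exists g, (size s <= q)%N ->
    {within closure A, continuous g} /\ forall x, A x -> g x = Dseq s v x.
  by exists E.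
move=> s; have [sq|_] := leqP (size s) q; last by exists 0.
by have [g gv] := vext s sq; exists g.
Qed.

(* Leibniz rule along [s]: each direction of [s] differentiates exactly one
   factor, so no symmetry of mixed partial derivatives is needed. *)
Definition Dmul (Df Dg : seq 'I_n -> 'rV[R]_n -> R) (s : seq 'I_n) (z : 'rV[R]_n) :=
  \sum_(m <- masks (size s)) Df (mask m s) z * Dg (mask (map negb m) s) z.

Lemma tower_mul f g Df Dg : derivative_tower f Df -> derivative_tower g Dg ->
  derivative_tower (fun z => f z * g z) (Dmul Df Dg).
Proof.
case=> f0 fD [g0 gD]; split=> [x Ax|s sq i x Ax].
  by rewrite /Dmul big_cons big_nil addr0 f0 ?g0.
rewrite /Dmul /= big_cat !big_map /= -big_split /=.
apply: is_derive_big => m.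
have mq b : (size (mask b s) < q)%N := leq_ltn_trans (size_subseq (mask_subseq b s)) sq.
apply: is_derive_eq (is_deriveM (fD _ (mq m) i x Ax) (gD _ (mq (map negb m)) i x Ax)) _.
by rewrite addrC; congr (_ + _); exact: mulrC.
Qed.

Lemma Cq_mul f g : Cq q A f -> Cq q A g -> Cq q A (fun z => f z * g z).
Proof.
move=> Cf Cg; have [Ef HEf] := Cq_extensions Cf; have [Eg HEg] := Cq_extensions Cg.
apply: Cq_of_tower (tower_mul (Cq_tower Cf) (Cq_tower Cg)) _ _.
  by apply: within_continuousM; [case: Cf|case: Cg].
move=> s sq; exists (Dmul Ef Eg s); split.
  apply: within_continuous_sum => m; have mq b : (size (mask b s) <= q)%N.
    exact: leq_trans (size_subseq (mask_subseq b s)) sq.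
  by apply: within_continuousM; [case: (HEf _ (mq m))|case: (HEg _ (mq (map negb m)))].
move=> x Ax; apply: eq_bigr => m _.
by rewrite (HEf _ _).2 ?(HEg _ _).2 //; apply: leq_trans (size_subseq (mask_subseq _ s)) sq.
Qed.

Lemma Dseq_mul f g : Cq q A f -> Cq q A g ->
  forall s, (size s <= q)%N -> forall x, A x ->
  Dseq s (fun z => f z * g z) x = Dmul (fun t => Dseq t f) (fun t => Dseq t g) s x.
Proof. by move=> Cf Cg; apply: Dseq_tower; apply: tower_mul; exact: Cq_tower. Qed.

Definition Dlin (N : nat) (c : 'I_N -> R) (D : 'I_N -> seq 'I_n -> 'rV[R]_n -> R) s z :=
  \sum_(j < N) c j * D j s z.

Lemma tower_lin N (c : 'I_N -> R) F D : (forall j, derivative_tower (F j) (D j)) ->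
  derivative_tower (fun z => \sum_(j < N) c j * F j z) (Dlin c D).
Proof.
move=> FD; split=> [x Ax|s sq i x Ax]; first by apply: eq_bigr => j _; rewrite (FD j).1.
by apply: is_derive_big => j; apply: is_deriveZ; exact: (FD j).2.
Qed.

Lemma Cq_lin N (c : 'I_N -> R) F : (forall j, Cq q A (F j)) ->
  Cq q A (fun z => \sum_(j < N) c j * F j z).
Proof.
move=> CF; have /choice[E HE] := fun j => Cq_extensions (CF j).
apply: Cq_of_tower (tower_lin c (fun j => Cq_tower (CF j))) _ _.
  apply: within_continuous_sum => j; apply: within_continuousM; last by case: (CF j).
  by move=> x; exact: cvg_cst.
move=> s sq; exists (Dlin c E s); split.
  apply: within_continuous_sum => j; apply: within_continuousM; last by case: (HE j s sq).
  by move=> x; exact: cvg_cst.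
by move=> x Ax; apply: eq_bigr => j _; rewrite (HE j s sq).2.
Qed.

Lemma Dseq_lin N (c : 'I_N -> R) F : (forall j, Cq q A (F j)) ->
  forall s, (size s <= q)%N -> forall x, A x ->
  Dseq s (fun z => \sum_(j < N) c j * F j z) x = \sum_(j < N) c j * Dseq s (F j) x.
Proof. by move=> CF; apply: Dseq_tower; apply: tower_lin => j; exact: Cq_tower. Qed.

End DerivativeTower.

Section MultiIndices.
Context (n q : nat).

Lemma size_mseq (a : mindex n q) : size (mseq a) = mabs a.
Proof.
rewrite /mseq /mabs size_flatten /shape -map_comp sumnE big_map big_enum /=.
by apply: eq_bigr => i _; rewrite /= size_nseq.
Qed.

Lemma mask_nseq_cat (T : Type) (k : nat) (i : T) (s : seq T) (m : bitseq) :
  mask m (nseq k i ++ s) = nseq (count id (take k m)) i ++ mask (drop k m) s.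
Proof. by elim: k m => [|k IH] [|[] m] //=; rewrite IH. Qed.

Lemma mask_flatten_nseq (l : seq 'I_n) (c : 'I_n -> nat) (m : bitseq) : uniq l ->
  exists2 c' : 'I_n -> nat, forall i, (c' i <= c i)%N &
    mask m (flatten [seq nseq (c i) i | i <- l]) = flatten [seq nseq (c' i) i | i <- l].
Proof.
elim: l m => [|i l IH] m /=; first by exists c; rewrite ?mask0.
case/andP => il ul; rewrite mask_nseq_cat.
have [c1 c1c ->] := IH (drop (c i) m) ul.
exists (fun j => if j == i then count id (take (c i) m) else c1 j).
  move=> j; case: eqP => [->|_] //; apply: leq_trans (count_size _ _) _.
  by rewrite size_take; case: ltnP => // /ltnW.
rewrite eqxx; congr (_ ++ flatten _); apply/eq_in_map => j jl.
by case: eqP => // ji; move: il; rewrite -ji jl.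
Qed.

Lemma mask_mseq (a : mindex n q) (m : bitseq) :
  exists b : mindex n q, mask m (mseq a) = mseq b.
Proof.
have [c' c'a E] := mask_flatten_nseq (fun i => nat_of_ord (a i)) m (enum_uniq 'I_n).
exists [ffun i => inord (c' i)]; rewrite /mseq E; congr flatten; apply: eq_map => i.
by rewrite ffunE inordK // (leq_ltn_trans (c'a i)).
Qed.

Lemma mfact_le (b : mindex n q) : (mfact b <= q`! ^ n)%N.
Proof.
have -> : (q`! ^ n = \prod_(i < n) q`!)%N by rewrite prod_nat_const card_ord.
by apply: leq_prod => i _; apply: leq_fact; rewrite -ltnS.
Qed.

End MultiIndices.

Section CqNorm.
Context {R : realType} (n q : nat) (A : set 'rV[R]_n).

Definition sum_inv_mfact : R := \sum_(a : mindex n q | (mabs a <= q)%N) (mfact a)%:R^-1.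

Lemma sum_inv_mfact_ge0 : 0 <= sum_inv_mfact.
Proof. by apply: sumr_ge0 => a _; rewrite invr_ge0. Qed.

Lemma Cq_norm_ge0 v : 0 <= Cq_norm q A v.
Proof. by apply: sumr_ge0 => a _; rewrite mulr_ge0 ?invr_ge0 ?sup_norm_ge0. Qed.

Lemma Cq_norm_le v c : 0 <= c ->
  (forall a : mindex n q, (mabs a <= q)%N -> forall z, A z -> `|pderiv a v z| <= c) ->
  Cq_norm q A v <= c * sum_inv_mfact.
Proof.
move=> c0 vc; rewrite /Cq_norm mulr_sumr; apply: ler_sum => a aq.
by rewrite mulrC ler_wpM2r ?invr_ge0 // sup_norm_le // => z; exact: vc.
Qed.

Lemma pderiv_le_Cq_norm v (b : mindex n q) z :
  bounded_set A -> Cq q A v -> (mabs b <= q)%N -> A z ->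
  `|pderiv b v z| <= (mfact b)%:R * Cq_norm q A v.
Proof.
move=> bA [_ [_ vext]] bq Az.
have [g [cg gv]] : exists g, {within closure A, continuous g} /\
    forall x, A x -> g x = Dseq (mseq b) v x by apply: vext; rewrite size_mseq.
have [M _ gM] := within_continuous_bounded bA cg.
have vM x : A x -> `|pderiv b v x| <= M.
  by move=> Ax; rewrite /pderiv -gv // gM //; exact: subset_closure.
have mf0 : (0 < (mfact b)%:R :> R) by rewrite ltr0n prodn_gt0 // => i; exact: fact_gt0.
rewrite -ler_pdivrMl // /Cq_norm (bigD1 b) //= -[X in X <= _]addr0 lerD //.
  by rewrite ler_pM2l ?invr_gt0 //; exact: le_sup_norm vM Az.
by apply: sumr_ge0 => a _; rewrite mulr_ge0 ?invr_ge0 ?sup_norm_ge0.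
Qed.

Definition Cq_bounded (B : R) v :=
  Cq q A v /\ forall s, (size s <= q)%N -> forall x, A x -> `|Dseq s v x| <= B.

Hypothesis Aop : open A.

Lemma Cq_bounded_lin N (c : 'I_N -> R) F B : (forall j, Cq_bounded B (F j)) ->
  Cq_bounded ((\sum_(j < N) `|c j|) * B) (fun z => \sum_(j < N) c j * F j z).
Proof.
move=> FB; split; first by apply: Cq_lin => // j; case: (FB j).
move=> s sq x Ax; rewrite (Dseq_lin Aop c (fun j => (FB j).1)) //.
apply: le_trans (ler_norm_sum _ _ _) _; rewrite mulr_suml; apply: ler_sum => j _.
by rewrite normrM ler_wpM2l // (FB j).2.
Qed.

Lemma Dmul_le (Df Dg : seq 'I_n -> 'rV[R]_n -> R) s z cf cg :
  0 <= cf -> 0 <= cg -> (size s <= q)%N ->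
  (forall m, `|Df (mask m s) z| <= cf) -> (forall m, `|Dg (mask m s) z| <= cg) ->
  `|Dmul Df Dg s z| <= (2 ^ q)%:R * (cf * cg).
Proof.
move=> cf0 cg0 sq fc gc; apply: le_trans (ler_norm_sum _ _ _) _.
apply: le_trans (_ : \sum_(m <- masks (size s)) (cf * cg) <= _).
  by apply: ler_sum => m _; rewrite normrM ler_pM.
rewrite big_const_seq count_predT size_masks iter_addr_0 mulr_natl.
by apply: ler_wpMn2l; rewrite ?mulr_ge0 // leq_exp2l.
Qed.

(* Only [f] needs bounds on all iterated derivatives: the derivatives of [g]
   produced by the Leibniz rule are along masks of [mseq a], which are again of
   the form [mseq b] ([mask_mseq]). *)
Lemma Cq_norm_mul_le f g cf cg : 0 <= cf -> 0 <= cg ->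
  Cq_bounded cf f -> Cq q A g ->
  (forall b : mindex n q, (mabs b <= q)%N -> forall z, A z -> `|pderiv b g z| <= cg) ->
  Cq_norm q A (fun z => f z * g z) <= (2 ^ q)%:R * (cf * cg) * sum_inv_mfact.
Proof.
move=> cf0 cg0 [Cf fB] Cg gB; apply: Cq_norm_le => [|a aq z Az].
  by rewrite mulr_ge0 ?mulr_ge0.
have sa : (size (mseq a) <= q)%N by rewrite size_mseq.
have ma m : (size (mask m (mseq a)) <= q)%N.
  exact: leq_trans (size_subseq (mask_subseq m _)) sa.
rewrite /pderiv (Dseq_mul Aop Cf Cg) //; apply: Dmul_le => // m; first exact: fB.
by have [b Eb] := mask_mseq a m; rewrite Eb; apply: gB; rewrite // -size_mseq -Eb.
Qed.

End CqNorm.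

Section DirectionalDerivatives.
Context {R : realType}.

Lemma is_derive_affine {V W : normedModType R} (H : W -> R) (g : V -> W)
    (z e : V) (e' : W) (df : R) :
  (forall t : R, g (t *: e + z) = t *: e' + g z) ->
  is_derive (g z) e' H df -> is_derive z e (H \o g) df.
Proof.
move=> gaff [dH <-].
have quot : (fun h : R => h^-1 *: ((H \o g \o shift z) (h *: e) - (H \o g) z)) =
    (fun h : R => h^-1 *: ((H \o shift (g z)) (h *: e') - H (g z))).
  by apply/funext => h /=; rewrite gaff.
by apply: DeriveDef; rewrite /derivable /derive quot.
Qed.

Lemma is_derive_line {V : normedModType R} (f : V -> R) (e z : V) (s df : R) :
  is_derive (s *: e + z) e f df -> is_derive s 1 (fun s => f (s *: e + z)) df.
Proof.
apply: (is_derive_affine (g := fun s : R => s *: e + z)) => t.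
by rewrite scalerDl addrA [t *: 1]mulr1.
Qed.

Lemma MVT_around0 (f df : R -> R) (r t : R) :
  (forall s : R, `|s| < r -> is_derive s 1 f (df s)) -> t != 0 -> `|t| < r ->
  exists c, `|c| < `|t| /\ f t - f 0 = df c * t.
Proof.
move=> fD t0 tr.
have mvt a b : a < b -> `|a| < r -> `|b| < r ->
    exists2 c, c \in `]a, b[ & f b - f a = df c * (b - a).
  move=> ab ar br; have inr s : a <= s -> s <= b -> `|s| < r.
    by move=> aS sb; move: ar br; rewrite !ltr_norml; lra.
  apply: MVT => // [s|]; first by rewrite in_itv /= => /andP[aS sb]; apply/fD/inr; lra.
  apply: derivable_within_continuous => s; rewrite in_itv /= => /andP[aS sb].
  by have [] := fD s (inr s aS sb).
have r0 : `|0 : R| < r by rewrite normr0; exact: le_lt_trans tr.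
case: (ltgtP t 0) => [tn|tp|/eqP]; last by rewrite (negbTE t0).
- have [c] := mvt t 0 tn tr r0; rewrite in_itv /= => /andP[tc c0] E.
  exists c; split; first by rewrite !ltr0_norm // ltrN2.
  by apply/eqP; rewrite -eqr_opp opprB E sub0r mulrN.
- have [c] := mvt 0 t tp r0 tr; rewrite in_itv /= => /andP[c0 ct] E.
  by exists c; rewrite !gtr0_norm // E subr0.
Qed.

Lemma is_derive_of_increment {V : normedModType R} (f : V -> R) (z e : V) (L : R) :
  (forall eps : R, 0 < eps -> exists2 rho : R, 0 < rho & forall t : R, t != 0 ->
     `|t| < rho -> `|f (t *: e + z) - f z - t * L| <= eps * `|t|) ->
  is_derive z e f L.
Proof.
move=> incr.
have quot : (fun h : R => h^-1 *: ((f \o shift z) (h *: e) - f z)) @ 0^' --> L.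
  apply/cvgrPdist_le => eps eps0; have [rho rho0 fL] := incr eps eps0.
  near=> h; have h0 : h != 0 by near: h; exact: nbhs_dnbhs_neq.
  have -> : L - h^-1 *: ((f \o shift z) (h *: e) - f z) =
      - (h^-1 * (f (h *: e + z) - f z - h * L)) by rewrite /GRing.scale /=; field.
  rewrite normrN normrM normrV ?unitfE // mulrC ler_pdivrMr ?normr_gt0 //.
  by apply: fL => //; near: h; exact: dnbhs0_lt.
by apply: DeriveDef; [apply/cvg_ex; exists L|exact: cvg_lim].
Unshelve. all: by end_near.
Qed.

End DirectionalDerivatives.

Section NormedClosure.
Context {R : realType} {V : normedModType R}.

Lemma closure_near (A : set V) x del : closure A x -> 0 < del ->
  exists2 x', A x' & `|x - x'| < del.
Proof.
move=> Ax del0; have [a [Aa xa]] := Ax _ (nbhsx_ballx x del del0).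
by exists a => //; move: xa; rewrite -ball_normE.
Qed.

Lemma open_normP (A : set V) z : open A -> A z ->
  exists2 r : R, 0 < r & forall w, `|z - w| < r -> A w.
Proof.
rewrite openE => /(_ z) zA /zA /nbhs_ballP[r r0 rA].
by exists r => // w zw; apply: rA; rewrite -ball_normE.
Qed.

Lemma within_continuous_normP (A : set V) (f : V -> R) :
  {within A, continuous f} <-> forall x, A x -> forall eps : R, 0 < eps ->
    exists2 del : R, 0 < del & forall z, A z -> `|x - z| < del -> `|f x - f z| < eps.
Proof.
rewrite subspace_continuousP; split=> [fc x Ax eps eps0|fc x Ax].
  move/cvgrPdist_lt: (fc x Ax) => /(_ eps eps0) /nbhs_ballP[del del0 fz].
  by exists del => // z Az xz; apply: fz; rewrite // -ball_normE.
apply/cvgrPdist_lt => eps eps0; have [del del0 fz] := fc x Ax eps eps0.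
by apply/nbhs_ballP; exists del => // z; rewrite -ball_normE /= => xz Az; exact: fz.
Qed.

End NormedClosure.

Section ParameterClosure.
Context {R : realType} {U : normedModType R} {d : nat} (X : set U) (Om : set 'rV[R]_d).
Hypothesis Oop : open Om.

Definition jointly_continuous (F : U -> 'rV[R]_d -> R) :=
  forall x z, closure X x -> closure Om z -> forall eps : R, 0 < eps ->
  exists2 del : R, 0 < del & forall x' z', closure X x' -> closure Om z' ->
    `|x - x'| < del -> `|z - z'| < del -> `|F x z - F x' z'| < eps.

Variables (F Gd : U -> 'rV[R]_d -> R) (e : 'rV[R]_d).
Hypotheses (e_le1 : `|e| <= 1) (jF : jointly_continuous F) (jGd : jointly_continuous Gd).
Hypothesis FD : forall x z, X x -> Om z -> is_derive z e (F x) (Gd x z).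

Lemma closure_param_increment_le x z : closure X x -> Om z ->
  forall eps : R, 0 < eps -> exists2 rho : R, 0 < rho & forall t : R, t != 0 ->
    `|t| < rho -> `|F x (t *: e + z) - F x z - t * Gd x z| <= eps * `|t|.
Proof.
move=> Xx Oz eps eps0; have Cz := subset_closure Oz.
have line_dist s : `|z - (s *: e + z)| <= `|s|.
  by rewrite opprD addrCA subrr addr0 normrN normrZ ler_piMr.
have [r r0 rO] := open_normP Oop Oz.
have lineO s : `|s| < r -> Om (s *: e + z).
  by move=> sr; apply: rO; exact: le_lt_trans (line_dist s) sr.
have [d1 d10 Gd1] := jGd Xx Cz eps0.
exists (Num.min d1 r) => [|t t0]; first by rewrite lt_min d10 r0.
rewrite lt_min => /andP[td1 tr]; apply/ler_addgt0Pr => eta eta0.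
have eta2 : 0 < eta / 2 by rewrite divr_gt0.
have Ct : closure Om (t *: e + z) := subset_closure (lineO t tr).
have [d2 d20 F2] := jF Xx Ct eta2.
have [d3 d30 F3] := jF Xx Cz eta2.
have dm0 : 0 < Num.min d1 (Num.min d2 d3) by rewrite !lt_min d10 d20 d30.
have [x' Xx'] := closure_near Xx dm0; rewrite !lt_min => /and3P[xd1 xd2 xd3].
have Cx' := subset_closure Xx'.
have [c [ct Fc]] := MVT_around0 (f := fun s => F x' (s *: e + z))
  (fun s sr => is_derive_line (FD Xx' (lineO s sr))) t0 tr.
rewrite scale0r add0r in Fc.
have Gdc : `|Gd x z - Gd x' (c *: e + z)| < eps.
  apply: Gd1 => //; first exact/subset_closure/lineO/(lt_trans ct tr).
  by apply: le_lt_trans (line_dist c) _; exact: lt_trans ct td1.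
have Ft : `|F x (t *: e + z) - F x' (t *: e + z)| < eta / 2.
  by apply: F2 => //; rewrite subrr normr0.
have Fz : `|F x z - F x' z| < eta / 2 by apply: F3 => //; rewrite subrr normr0.
have -> : F x (t *: e + z) - F x z - t * Gd x z =
    (F x (t *: e + z) - F x' (t *: e + z)) - (F x z - F x' z) +
    t * (Gd x' (c *: e + z) - Gd x z) by rewrite mulrBr (mulrC t (Gd x' _)) -Fc; ring.
have tG : `|t * (Gd x' (c *: e + z) - Gd x z)| <= `|t| * eps.
  by rewrite normrM distrC ler_wpM2l // ltW.
apply: le_trans (ler_normD _ _) _; apply: le_trans (lerD (ler_normB _ _) tG) _.
by rewrite [eps * _]mulrC; lra.
Qed.

Lemma is_derive_closure_param x z : closure X x -> Om z -> is_derive z e (F x) (Gd x z).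
Proof. by move=> Xx Oz; apply: is_derive_of_increment; exact: closure_param_increment_le. Qed.

End ParameterClosure.

Section RowNorms.
Context {R : realType}.

Lemma mx_norm_le m n (x : 'M[R]_(m, n)) (M : R) :
  0 <= M -> (forall i j, `|x i j| <= M) -> `|x| <= M.
Proof.
move=> M0 xM; rewrite [`|x|]mx_normrE.
by elim/big_ind: _ => // a b aM bM; rewrite ge_max aM bM.
Qed.

Lemma mx_norm_entry_le m n (x : 'M[R]_(m, n)) i j : `|x i j| <= `|x|.
Proof. by rewrite [`|x|]mx_normrE; exact: (le_bigmax _ _ (i, j)). Qed.

Lemma norm_delta_le1 n (i : 'I_n) : `|delta_mx 0 i : 'rV[R]_n| <= 1.
Proof. by apply: mx_norm_le => // a b; rewrite mxE; case: (_ && _); rewrite ?normr1 ?normr0. Qed.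

Lemma norm_row_mxB n1 n2 (a a' : 'rV[R]_n1) (b b' : 'rV[R]_n2) :
  `|row_mx a b - row_mx a' b'| <= Num.max `|a - a'| `|b - b'|.
Proof.
rewrite opp_row_mx add_row_mx; apply: mx_norm_le => [|i j]; first by rewrite le_max normr_ge0.
rewrite mxE; case: splitP => k _; rewrite le_max mx_norm_entry_le //.
by rewrite orbT.
Qed.

End RowNorms.

Section Slices.
Context {R : realType} (d q : nat) (Om : set 'rV[R]_d) (H : 'rV[R]_(d + d) -> R).
Hypotheses (Oop : open Om) (CH : Cq q (prodset Om) H).
Variables (G : seq 'I_(d + d) -> 'rV[R]_(d + d) -> R) (Bk : R).
Hypothesis G0 : G [::] = H.
Hypothesis Gc : forall t, (size t <= q)%N -> {within closure (prodset Om), continuous (G t)}.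
Hypothesis GD : forall t, (size t <= q)%N -> forall z, prodset Om z -> G t z = Dseq t H z.
Hypothesis GB : forall t, (size t <= q)%N -> forall z, closure (prodset Om) z -> `|G t z| <= Bk.

Variables (emb : 'rV[R]_d -> 'rV[R]_d -> 'rV[R]_(d + d)) (sh : 'I_d -> 'I_(d + d)).
Hypothesis emb_shift : forall x z (t : R) i,
  emb x (t *: delta_mx 0 i + z) = t *: delta_mx 0 (sh i) + emb x z.
Hypothesis emb_dist : forall x z x' z',
  `|emb x z - emb x' z'| <= Num.max `|x - x'| `|z - z'|.
Hypothesis emb_prodset : forall x z, Om x -> Om z -> prodset Om (emb x z).

Lemma closure_emb x z : closure Om x -> closure Om z -> closure (prodset Om) (emb x z).
Proof.
move=> Cx Cz B /nbhs_ballP[eps eps0 epsB].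
have [x' Ox' xx'] := closure_near Cx eps0; have [z' Oz' zz'] := closure_near Cz eps0.
exists (emb x' z'); split; first exact: emb_prodset.
by apply: epsB; rewrite -ball_normE /=; apply: le_lt_trans (emb_dist _ _ _ _) _; rewrite gt_max xx'.
Qed.

Lemma jointly_continuous_emb t : (size t <= q)%N ->
  jointly_continuous Om Om (fun x z => G t (emb x z)).
Proof.
move=> tq x z Cx Cz eps eps0.
have [del del0 Gdel] := (within_continuous_normP _ _).1 (Gc tq) _ (closure_emb Cx Cz) _ eps0.
exists del => // x' z' Cx' Cz' xx' zz'; apply: Gdel; first exact: closure_emb.
by apply: le_lt_trans (emb_dist _ _ _ _) _; rewrite gt_max xx'.
Qed.

Definition Dslice x s z := G (map sh s) (emb x z).

Lemma is_derive_slice_interior s i x z : (size s < q)%N -> Om x -> Om z ->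
  is_derive z (delta_mx 0 i) (Dslice x s) (Dslice x (i :: s) z).
Proof.
move=> sq Ox Oz; have shq : (size (map sh s) < q)%N by rewrite size_map.
have Hnear : {near z, Dseq (map sh s) H \o emb x =1 Dslice x s}.
  near=> w; rewrite /Dslice /= GD ?size_map ?(ltnW sq) //.
  by apply: emb_prodset => //; near: w; exact: Oop.
apply: near_eq_is_derive Hnear _; rewrite /Dslice GD ?size_map //; last exact: emb_prodset.
apply: is_derive_affine => [t|]; first exact: emb_shift.
by apply: derivableP; case: CH => _ [+ _]; apply => //; exact: emb_prodset.
Unshelve. all: by end_near.
Qed.

(* For [x] on the boundary, [emb x z] lies outside [prodset Om]; the
   derivative of the slice is then inherited from interior [x']. *)
Lemma tower_slice x : closure Om x -> derivative_tower q Om (fun z => H (emb x z)) (Dslice x).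
Proof.
move=> Cx; split=> [z Oz|s sq i z Oz].
  by rewrite /Dslice G0.
have jc t : (size t <= q)%N -> jointly_continuous Om Om (fun x z => Dslice x t z).
  by move=> tq; apply: jointly_continuous_emb; rewrite size_map.
apply: (@is_derive_closure_param _ _ _ Om Om Oop (fun x => Dslice x s)
  (fun x z => Dslice x (i :: s) z)) => //; first exact: norm_delta_le1.
- exact/jc/ltnW.
- exact: jc.
- by move=> x' z' Ox' Oz'; exact: is_derive_slice_interior.
Qed.

Lemma within_continuous_slice x (f : 'rV[R]_d -> R) t : (size t <= q)%N ->
  closure Om x -> (forall z, closure Om z -> f z = G t (emb x z)) ->
  {within closure Om, continuous f}.
Proof.
move=> tq Cx fG; apply/within_continuous_normP => z Cz eps eps0.
have [del del0 Gdel] := jointly_continuous_emb tq Cx Cz eps0.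
by exists del => // z' Cz' zz'; rewrite !fG //; apply: Gdel; rewrite // subrr normr0.
Qed.

Lemma Cq_bounded_slice x : closure Om x -> Cq_bounded q Om Bk (fun z => H (emb x z)).
Proof.
move=> Cx; have tow := tower_slice Cx.
have sl s : (size s <= q)%N -> {within closure Om, continuous (Dslice x s)}.
  by move=> sq; apply: (@within_continuous_slice x _ (map sh s)); rewrite ?size_map.
split.
  apply: (Cq_of_tower Oop tow) => [|s sq]; last by exists (Dslice x s); split => //; exact: sl.
  by apply: (@within_continuous_slice x _ [::]) => // z Cz; rewrite G0.
move=> s sq z Oz; rewrite (Dseq_tower Oop tow) //.
by apply: GB; rewrite ?size_map //; apply: closure_emb => //; exact: subset_closure.
Qed.

End Slices.

Lemma exists_ub_size_le {R : realDomainType} (T : finType) (Q : nat) (b : seq T -> R) :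
  exists2 B, 0 <= B & forall t, (size t <= Q)%N -> b t <= B.
Proof.
exists (\big[Num.max/0]_(k < Q.+1) \big[Num.max/0]_(t : k.-tuple T) b t) => [|t tQ].
  exact: bigmax_ge_id.
apply: le_trans (le_bigmax _ _ (Ordinal (tQ : (size t < Q.+1)%N))).
exact: (le_bigmax 0 (fun u : (size t).-tuple T => b u) (in_tuple t)).
Qed.

(* [G [::]] is [H] itself, not just an extension, so that slices of [G [::]]
   through boundary points are still slices of [H]. *)
Lemma Cq_bounded_extensions {R : realType} (m q : nat) (P : set 'rV[R]_m) H :
  bounded_set P -> Cq q P H ->
  exists G : seq 'I_m -> 'rV[R]_m -> R, exists2 B, 0 <= B &
  [/\ G [::] = H,
      forall t, (size t <= q)%N -> {within closure P, continuous (G t)},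
      forall t, (size t <= q)%N -> forall z, P z -> G t z = Dseq t H z &
      forall t, (size t <= q)%N -> forall z, closure P z -> `|G t z| <= B].
Proof.
move=> bP CH; have [E HE] := Cq_extensions CH.
pose G t := if t is [::] then H else E t.
have Gc t : (size t <= q)%N -> {within closure P, continuous (G t)}.
  by case: t => [_|a t tq]; [case: CH|case: (HE _ tq)].
have /choice[b bG] t : exists B, (size t <= q)%N ->
    forall z, closure P z -> `|G t z| <= B.
  have [tq|_] := leqP (size t) q; last by exists 0.
  by have [B _ GB] := within_continuous_bounded bP (Gc t tq); exists B.
have [B B0 bB] := exists_ub_size_le q b.
exists G, B => //; split=> // [t tq z Pz|t tq z Cz]; last exact: le_trans (bG t tq z Cz) (bB t tq).
by case: t tq => [//|a t] tq; rewrite /= (HE _ tq).2.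
Qed.

Section Kernel.
Context {R : realType} (d q : nat) (Om : set 'rV[R]_d) (k : 'rV[R]_d -> 'rV[R]_d -> R).

Definition kernel_bounded (Bk : R) :=
  [/\ forall x z, closure Om x -> closure Om z -> `|k x z| <= Bk,
      forall x, closure Om x -> Cq_bounded q Om Bk (k x) &
      forall y, closure Om y -> Cq_bounded q Om Bk (fun z => k z y)].

Lemma bounded_prodset : bounded_set Om -> bounded_set (prodset Om).
Proof.
move=> /bounded_setP[M M0 OmM]; apply/bounded_setP; exists M => // w [Ow1 Ow2].
rewrite -(hsubmxK w); apply: mx_norm_le => // i j; rewrite mxE.
by case: splitP => l _; apply: le_trans (mx_norm_entry_le _ _ _) _; apply: OmM.
Qed.

Lemma exists_kernel_bound : open Om -> bounded_set Om -> Cq q (prodset Om) (kfun2 k) ->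
  exists2 Bk, 0 <= Bk & kernel_bounded Bk.
Proof.
move=> Oop bOm Ck.
have [G [Bk Bk0 [G0 Gc GD GB]]] := Cq_bounded_extensions (bounded_prodset bOm) Ck.
have kfun2_row x z : k x z = kfun2 k (row_mx x z) by rewrite /kfun2 row_mxKl row_mxKr.
have P_row x z : Om x -> Om z -> prodset Om (row_mx x z).
  by move=> Ox Oz; rewrite /prodset /= row_mxKl row_mxKr.
exists Bk => //; split.
- move=> x z Cx Cz; rewrite kfun2_row -G0; apply: GB => //.
  by apply: (closure_emb (emb := fun x z => row_mx x z)) => // *; exact: norm_row_mxB.
- move=> x Cx; have -> : k x = (fun z => kfun2 k (row_mx x z)).
    by apply/funext => z; rewrite kfun2_row.
  apply: (@Cq_bounded_slice _ _ _ _ _ Oop Ck G Bk G0 Gc GD GB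
    (fun x z => row_mx x z) (@rshift d d)) => // [x' z' t i|*]; last exact: norm_row_mxB.
  by rewrite delta_mx_rshift scale_row_mx add_row_mx scaler0 add0r.
- move=> y Cy; have -> : (fun z => k z y) = (fun z => kfun2 k (row_mx z y)).
    by apply/funext => z; rewrite kfun2_row.
  apply: (@Cq_bounded_slice _ _ _ _ _ Oop Ck G Bk G0 Gc GD GB
    (fun y z => row_mx z y) (@lshift d d)) => // [x' z' t i|*|*]; last exact: P_row.
    by rewrite delta_mx_lshift scale_row_mx add_row_mx scaler0 add0r.
  by rewrite maxC; exact: norm_row_mxB.
Qed.

End Kernel.

Section InfinityNorm.
Context {R : realType}.

Lemma mxnorm_inf_ge0 m (A : 'M[R]_m) : 0 <= mxnorm_inf A.
Proof. exact: bigmax_ge_id. Qed.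

Lemma mxnorm_inf_le m (A : 'M[R]_m) c :
  0 <= c -> (forall i, \sum_j `|A i j| <= c) -> mxnorm_inf A <= c.
Proof.
by move=> c0 Ac; rewrite /mxnorm_inf; elim/big_ind: _ => // a b ac bc; rewrite ge_max ac bc.
Qed.

Lemma mxnorm_inf_invmx_le m (A : 'M[R]_m) S : A \in unitmx -> 0 <= S ->
  (forall e : 'cV[R]_m, (forall i, `|(A *m e) i 0| <= 1) -> forall i, `|e i 0| <= S) ->
  mxnorm_inf (invmx A) <= S.
Proof.
move=> Au S0 AS; apply: mxnorm_inf_le => // i.
pose sg : 'cV[R]_m := \col_j Num.sg (invmx A i j).
have : `|(invmx A *m sg) i 0| <= S.
  apply: AS => j; rewrite mulmxA mulmxV // mul1mx mxE normr_sg.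
  by case: (_ != 0).
apply: le_trans; rewrite mxE; apply: le_trans (ler_norm _); rewrite le_eqVlt; apply/orP; left.
by apply/eqP; apply: eq_bigr => j _; rewrite mxE normrEsg mulrC.
Qed.

Lemma unitmx_ker0 m (A : 'M[R]_m) :
  (forall e : 'cV[R]_m, A *m e = 0 -> e = 0) -> A \in unitmx.
Proof.
move=> Ae0; rewrite unitmxE unitfE -det_tr; apply/negP => /det0P[v v0 vA].
have /Ae0 vT0 : A *m v^T = 0 by apply: trmx_inj; rewrite trmx_mul trmxK trmx0.
by move/eqP: v0; apply; rewrite -(trmxK v) vT0 trmx0.
Qed.

End InfinityNorm.

(* Keeps [h] an explicit argument of [w] and [y]. *)
Unset Implicit Arguments.

Section Nystrom.
Context {R : realType} (d q : nat) (Om : set 'rV[R]_d) (lam : R)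
  (k : 'rV[R]_d -> 'rV[R]_d -> R) (N : R -> nat)
  (y : forall h : R, 'I_(N h) -> 'rV[R]_d) (w : forall h : R, 'I_(N h) -> R).
Hypotheses (Oop : open Om) (bOm : bounded_set Om) (lam0 : lam != 0).
Variables (Bk CQ Cw M h : R).
Hypotheses (Bk0 : 0 <= Bk) (kB : kernel_bounded q Om k Bk).
Hypotheses (CQ0 : 0 <= CQ) (wB : \sum_(i < N h) `|w h i| <= CQ).
Hypothesis quad : forall v, Cq q Om v ->
  `|integral_on Om v - \sum_(i < N h) w h i * v (y h i)| <= Cw * h ^+ q * Cq_norm q Om v.
Hypothesis y_closure : forall i, closure Om (y h i).
Hypotheses (M0 : 0 <= M) (KM : forall v, {within closure Om, continuous v} ->
  supnorm Om v <= M * supnorm Om (fun x => lam * v x - Kop Om k v x)).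
Hypothesis h0 : 0 < h.

Definition nystrom_op (v : 'I_(N h) -> R) (i : 'I_(N h)) :=
  lam * v i - \sum_(j < N h) w h j * k (y h i) (y h j) * v j.

Definition nystrom_lift (v : 'I_(N h) -> R) (z : 'rV[R]_d) :=
  \sum_(j < N h) (lam^-1 * w h j * v j) * k z (y h j).

Let NA : R := sum_inv_mfact d q.
Let NA0 : 0 <= NA := sum_inv_mfact_ge0 d q.
Let hq0 : 0 <= h ^+ q := exprn_ge0 q (ltW h0).

Lemma Kop_quadrature_error x v cv : closure Om x -> Cq q Om v -> 0 <= cv ->
  (forall b : mindex d q, (mabs b <= q)%N -> forall z, Om z -> `|pderiv b v z| <= cv) ->
  `|Kop Om k v x - \sum_(i < N h) w h i * (k x (y h i) * v (y h i))|
    <= `|Cw| * h ^+ q * ((2 ^ q)%:R * (Bk * cv) * NA).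
Proof.
move=> Cx Cv cv0 vB; have [_ kxB _] := kB; have kxv := Cq_mul Oop (kxB x Cx).1 Cv.
apply: le_trans (_ : _ <= Cw * h ^+ q * Cq_norm q Om (fun z => k x z * v z)) _.
  exact: quad kxv.
apply: le_trans (ler_wpM2r (Cq_norm_ge0 _ _ _) (ler_wpM2r hq0 (ler_norm Cw))) _.
apply: ler_wpM2l; first by rewrite mulr_ge0.
by apply: (Cq_norm_mul_le Oop) => //; exact: kxB.
Qed.

Lemma Kop_quadrature_error_Cq x u : closure Om x -> Cq q Om u ->
  `|Kop Om k u x - \sum_(i < N h) w h i * (k x (y h i) * u (y h i))|
    <= `|Cw| * h ^+ q * ((2 ^ q)%:R * (Bk * ((q`! ^ d)%:R * Cq_norm q Om u)) * NA).
Proof.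
move=> Cx Cu; apply: Kop_quadrature_error => //; first by rewrite mulr_ge0 ?Cq_norm_ge0.
move=> b bq z Oz; apply: le_trans (pderiv_le_Cq_norm bOm Cu bq Oz) _.
by rewrite ler_wpM2r ?Cq_norm_ge0 // ler_nat mfact_le.
Qed.

Lemma nystrom_opB (a b : 'I_(N h) -> R) i :
  nystrom_op (fun j => a j - b j) i = nystrom_op a i - nystrom_op b i.
Proof.
rewrite /nystrom_op (eq_bigr (fun j => w h j * k (y h i) (y h j) * a j -
  w h j * k (y h i) (y h j) * b j)) ?sumrB => [|j _]; ring.
Qed.

Lemma nystrom_lift_node v i : nystrom_lift v (y h i) = v i - lam^-1 * nystrom_op v i.
Proof.
rewrite /nystrom_lift /nystrom_op mulrBr mulrA mulVf // mul1r opprB addrC subrK mulr_sumr.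
by apply: eq_bigr => j _; ring.
Qed.

Lemma weighted_kernel_sum_le x (a : 'I_(N h) -> R) A : closure Om x -> 0 <= A ->
  (forall i, `|a i| <= A) -> `|\sum_(i < N h) w h i * k x (y h i) * a i| <= CQ * Bk * A.
Proof.
have [kB1 _ _] := kB; move=> Cx A0 aA; apply: le_trans (ler_norm_sum _ _ _) _.
apply: le_trans (_ : \sum_(i < N h) `|w h i| * (Bk * A) <= _).
  by apply: ler_sum => i _; rewrite !normrM -mulrA ler_wpM2l // ler_pM // kB1.
by rewrite -mulr_suml -mulrA ler_wpM2r ?mulr_ge0.
Qed.

Lemma nystrom_lift_residual_le v T E x : closure Om x -> 0 <= T -> 0 <= E ->
  (forall i, `|v i| <= E) -> (forall i, `|nystrom_op v i| <= T) ->
  `|lam * nystrom_lift v x - Kop Om k (nystrom_lift v) x| <=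
    `|lam|^-1 * CQ * Bk * T + `|Cw| * h ^+ q * ((2 ^ q)%:R * (Bk * (`|lam|^-1 * CQ * E * Bk)) * NA).
Proof.
move=> Cx T0 E0 vE vT; have [kB1 _ kyB] := kB.
have li0 : 0 <= `|lam|^-1 by rewrite invr_ge0.
have cB : \sum_(j < N h) `|lam^-1 * w h j * v j| <= `|lam|^-1 * CQ * E.
  apply: le_trans (_ : \sum_(j < N h) `|lam|^-1 * E * `|w h j| <= _).
    apply: ler_sum => j _; rewrite !normrM normfV mulrAC.
    by apply: ler_wpM2r => //; apply: ler_wpM2l.
  by rewrite -mulr_sumr mulrAC; apply: ler_wpM2r => //; apply: ler_wpM2l.
have [Cl lB] := Cq_bounded_lin Oop (fun j => lam^-1 * w h j * v j) (fun j => kyB _ (y_closure j)).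
have lB' (b : mindex d q) : (mabs b <= q)%N -> forall z, Om z ->
    `|pderiv b (nystrom_lift v) z| <= `|lam|^-1 * CQ * E * Bk.
  by move=> bq z Oz; apply: le_trans (lB _ _ z Oz) _; rewrite ?size_mseq // ler_wpM2r.
have Kq := Kop_quadrature_error x _ _ Cx Cl (mulr_ge0 (mulr_ge0 (mulr_ge0 li0 CQ0) E0) Bk0) lB'.
set Q := \sum_(i < N h) w h i * (k x (y h i) * nystrom_lift v (y h i)).
have iden : lam * nystrom_lift v x - Q =
    lam^-1 * \sum_(i < N h) w h i * k x (y h i) * nystrom_op v i.
  rewrite /Q; under eq_bigr => i _ do rewrite nystrom_lift_node.
  by rewrite /nystrom_lift !mulr_sumr -sumrB; apply: eq_bigr => i _; field.
have -> : lam * nystrom_lift v x - Kop Om k (nystrom_lift v) x =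
    (lam * nystrom_lift v x - Q) - (Kop Om k (nystrom_lift v) x - Q) by ring.
rewrite iden.
apply: le_trans (ler_normB _ _) _; apply: lerD Kq.
rewrite normrM normfV -!mulrA ler_wpM2l // !mulrA; exact: weighted_kernel_sum_le.
Qed.

Definition nystrom_stab_const := 2 * (M * (`|lam|^-1 * CQ * Bk) + `|lam|^-1).
Definition nystrom_residual_const :=
  `|Cw| * ((2 ^ q)%:R * (Bk * (`|lam|^-1 * CQ * Bk)) * NA).

Lemma nystrom_lift_le v z : closure Om z ->
  `|nystrom_lift v z| <= (\sum_(j < N h) `|lam^-1 * w h j * v j|) * Bk.
Proof.
have [kB1 _ _] := kB; move=> Cz; apply: le_trans (ler_norm_sum _ _ _) _.
by rewrite mulr_suml; apply: ler_sum => j _; rewrite normrM ler_wpM2l // kB1.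
Qed.

Lemma nystrom_stability v T :
  M * nystrom_residual_const * h ^+ q <= 1 / 2 -> 0 <= T ->
  (forall i, `|nystrom_op v i| <= T) -> forall i, `|v i| <= nystrom_stab_const * T.
Proof.
move=> small T0 vT; pose E := \big[Num.max/0]_i `|v i|.
have E0 : 0 <= E := bigmax_ge_id _ _ _ _.
have vE i : `|v i| <= E := le_bigmax 0 (fun i => `|v i|) i.
suff ET : E <= nystrom_stab_const * T by move=> i; exact: le_trans (vE i) ET.
set RHS := `|lam|^-1 * CQ * Bk * T +
  `|Cw| * h ^+ q * ((2 ^ q)%:R * (Bk * (`|lam|^-1 * CQ * E * Bk)) * NA).
have RHS0 : 0 <= RHS.
  by rewrite addr_ge0 ?mulr_ge0 ?invr_ge0.
have cont : {within closure Om, continuous (nystrom_lift v)}.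
  have [_ _ kyB] := kB.
  by case: (Cq_lin Oop (fun j => lam^-1 * w h j * v j) (fun j => (kyB _ (y_closure j)).1)).
have sup_lift : supnorm Om (nystrom_lift v) <= M * RHS.
  apply: le_trans (KM _ cont) _; apply: ler_wpM2l => //.
  by apply: sup_norm_le => // x Cx; exact: nystrom_lift_residual_le.
have EB : E <= M * RHS + `|lam|^-1 * T.
  apply: (big_ind (fun e => e <= M * RHS + `|lam|^-1 * T)) => [|a b aB bB|i _].
  - by rewrite addr_ge0 ?mulr_ge0 ?invr_ge0.
  - by rewrite ge_max aB bB.
  have -> : v i = nystrom_lift v (y h i) + lam^-1 * nystrom_op v i.
    by rewrite nystrom_lift_node subrK.
  apply: le_trans (ler_normD _ _) (lerD (le_trans _ sup_lift) _).
    exact: le_sup_norm (fun z Cz => nystrom_lift_le v z Cz) (y_closure i).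
  by rewrite normrM normfV ler_wpM2l ?invr_ge0.
have sE : M * nystrom_residual_const * h ^+ q * E <= E / 2.
  by move: (ler_wpM2r E0 small); lra.
have : M * RHS = M * (`|lam|^-1 * CQ * Bk) * T + M * nystrom_residual_const * h ^+ q * E.
  by rewrite /RHS /nystrom_residual_const; ring.
by rewrite /nystrom_stab_const; lra.
Qed.

Definition nystrom_error_const :=
  `|lam|^-1 * (1 + CQ * Bk * nystrom_stab_const) *
  (`|Cw| * ((2 ^ q)%:R * (Bk * (q`! ^ d)%:R) * NA)).

Lemma nystrom_stab_const_ge0 : 0 <= nystrom_stab_const.
Proof. by rewrite !mulr_ge0 ?addr_ge0 ?mulr_ge0 ?invr_ge0. Qed.

Lemma nystrom_error_const_ge0 : 0 <= nystrom_error_const.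
Proof.
rewrite /nystrom_error_const !mulr_ge0 ?invr_ge0 //.
exact: addr_ge0 ler01 (mulr_ge0 (mulr_ge0 CQ0 Bk0) nystrom_stab_const_ge0).
Qed.

Lemma nystrom_consistency u f uh : Cq q Om u ->
  (forall x, closure Om x -> lam * u x - Kop Om k u x = f x) ->
  (forall i, nystrom_op uh i = f (y h i)) ->
  forall i, `|nystrom_op (fun j => u (y h j) - uh j) i| <=
    `|Cw| * h ^+ q * ((2 ^ q)%:R * (Bk * ((q`! ^ d)%:R * Cq_norm q Om u)) * NA).
Proof.
move=> Cu uf uhf i; rewrite nystrom_opB uhf -(uf _ (y_closure i)).
have -> : nystrom_op (fun j => u (y h j)) i - (lam * u (y h i) - Kop Om k u (y h i)) =
    Kop Om k u (y h i) - \sum_(j < N h) w h j * (k (y h i) (y h j) * u (y h j)).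
  by rewrite /nystrom_op (eq_bigr (fun j => w h j * (k (y h i) (y h j) * u (y h j))))
    => [|j _]; [ring|rewrite mulrA].
exact: Kop_quadrature_error_Cq.
Qed.

Lemma nystrom_error u f uh :
  M * nystrom_residual_const * h ^+ q <= 1 / 2 -> Cq q Om u ->
  (forall x, closure Om x -> lam * u x - Kop Om k u x = f x) ->
  (forall i, nystrom_op uh i = f (y h i)) ->
  supnorm Om (fun x => u x - nystrom k lam y w f uh x) <=
    nystrom_error_const * h ^+ q * Cq_norm q Om u.
Proof.
move=> small Cu uf uhf.
pose T := `|Cw| * h ^+ q * ((2 ^ q)%:R * (Bk * ((q`! ^ d)%:R * Cq_norm q Om u)) * NA).
have T0 : 0 <= T by rewrite !mulr_ge0 ?Cq_norm_ge0.
have S0 := nystrom_stab_const_ge0.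
have epsB := nystrom_stability _ T small T0 (nystrom_consistency u f uh Cu uf uhf).
apply: sup_norm_le => [|x Cx].
  by rewrite mulr_ge0 ?Cq_norm_ge0 // mulr_ge0 // nystrom_error_const_ge0.
have -> : u x - nystrom k lam y w f uh x = lam^-1 *
    ((Kop Om k u x - \sum_(i < N h) w h i * (k x (y h i) * u (y h i))) +
     \sum_(i < N h) w h i * k x (y h i) * (u (y h i) - uh i)).
  rewrite /nystrom -(uf x Cx) [X in _ = _ * (_ + X)](eq_bigr (fun i =>
    w h i * (k x (y h i) * u (y h i)) - w h i * k x (y h i) * uh i)) => [|i _].
    by rewrite sumrB; field.
  by ring.
rewrite normrM normfV.
apply: le_trans (_ : _ <= `|lam|^-1 * (T + CQ * Bk * (nystrom_stab_const * T))) _.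
  rewrite ler_wpM2l ?invr_ge0 //; apply: le_trans (ler_normD _ _) (lerD _ _).
    exact: Kop_quadrature_error_Cq.
  by apply: weighted_kernel_sum_le => //; rewrite mulr_ge0.
by rewrite le_eqVlt; apply/orP; left; apply/eqP; rewrite /T /nystrom_error_const; ring.
Qed.

Lemma sysmx_mulmx (e : 'cV[R]_(N h)) i :
  (sysmx k lam y w h *m e) i 0 = nystrom_op (fun j => e j 0) i.
Proof.
rewrite /sysmx mulmxBl mul_scalar_mx mul_mx_diag !mxE; congr (_ - _).
by apply: eq_bigr => j _; rewrite !mxE (mulrC (k _ _)).
Qed.

Lemma mxnorm_inf_sysmx_le : mxnorm_inf (sysmx k lam y w h) <= `|lam| + CQ * Bk.
Proof.
have [kB1 _ _] := kB; apply: mxnorm_inf_le => [|i]; first by rewrite addr_ge0 ?mulr_ge0.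
apply: le_trans (_ : \sum_j (`|lam| * (i == j)%:R + Bk * `|w h j|) <= _).
  apply: ler_sum => j _; rewrite /sysmx mul_mx_diag !mxE mulr_natr.
  apply: le_trans (ler_normB _ _) (lerD _ _); first by rewrite normrMn.
  by rewrite normrM ler_wpM2r // kB1.
rewrite big_split /= -!mulr_sumr (bigD1 i) //= eqxx big1 ?addr0 ?mulr1.
  by rewrite mulrC lerD // ler_wpM2r.
by move=> j /negbTE; rewrite eq_sym => ->.
Qed.

Lemma nystrom_small_step : M * nystrom_residual_const * h ^+ q <= 1 / 2 ->
  [/\ sysmx k lam y w h \in unitmx,
      cond_inf (sysmx k lam y w h) <= (`|lam| + CQ * Bk) * nystrom_stab_const &
      forall f u, Cq q Om u -> (forall x, closure Om x -> lam * u x - Kop Om k u x = f x) ->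
      (exists! uh, forall i, nystrom_op uh i = f (y h i)) /\
      (forall uh, (forall i, nystrom_op uh i = f (y h i)) ->
         supnorm Om (fun x => u x - nystrom k lam y w f uh x) <=
           nystrom_error_const * h ^+ q * Cq_norm q Om u)].
Proof.
move=> small; set A := sysmx k lam y w h; have S0 := nystrom_stab_const_ge0.
have op0 v : (forall i, nystrom_op v i = 0) -> forall i, v i = 0.
  move=> v0 i; apply/normr0_eq0/eqP; rewrite eq_le normr_ge0 andbT.
  by rewrite -(mulr0 nystrom_stab_const) nystrom_stability // => j; rewrite v0 normr0.
have Au : A \in unitmx.
  apply: unitmx_ker0 => e Ae0; apply/matrixP => i j; rewrite (ord1 j) mxE.
  by apply: (op0 (fun j => e j 0)) => {}i; rewrite -sysmx_mulmx Ae0 mxE.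
split=> // [|f u Cu uf].
  apply: ler_pM; rewrite ?mxnorm_inf_ge0 ?mxnorm_inf_sysmx_le //.
  rewrite -[X in _ <= X]mulr1; apply: mxnorm_inf_invmx_le => // [|e Ae i].
    by rewrite mulr1.
  by apply: (nystrom_stability (fun j => e j 0)) => // j; rewrite -sysmx_mulmx.
split=> [|uh uhf]; last exact: nystrom_error Cu uf uhf.
pose uh i := (invmx A *m \col_j f (y h j)) i 0.
have uhf i : nystrom_op uh i = f (y h i).
  have := sysmx_mulmx (invmx A *m \col_j f (y h j)) i.
  by rewrite mulmxA mulmxV // mul1mx mxE => <-.
exists uh; split=> // v vf; apply/funext => i; apply/eqP; rewrite -subr_eq0; apply/eqP.
by apply: (op0 (fun j => uh j - v j)) => j; rewrite nystrom_opB uhf vf subrr.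
Qed.

End Nystrom.

Lemma quad_stable_bound {R : realType} {N : R -> nat} {w : forall h : R, 'I_(N h) -> R} :
  quad_stable w -> exists2 CQ, 0 <= CQ & forall h, 0 < h -> \sum_(i < N h) `|w h i| <= CQ.
Proof.
by case=> CQ wB; exists CQ => //; apply: le_trans (wB 1 ltr01); exact: sumr_ge0.
Qed.

Lemma not_in_spectrum_bound {R : realType} {d : nat} {Om : set 'rV[R]_d} {k lam} :
  not_in_spectrum Om k lam -> exists2 M, 0 <= M & forall v, {within closure Om, continuous v} ->
    supnorm Om v <= M * supnorm Om (fun x => lam * v x - Kop Om k v x).
Proof.
case=> _ [_ [M KM]]; exists (Num.max M 0) => [|v cv]; first by rewrite le_max lexx orbT.
by apply: le_trans (KM v cv) _; rewrite ler_wpM2r ?sup_norm_ge0 // le_max lexx.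
Qed.

Lemma small_step_le {R : realType} {a h : R} {q : nat} : 0 <= a -> (1 <= q)%N ->
  0 < h -> h < Num.min 1 (2 * a + 1)^-1 -> a * h ^+ q <= 1 / 2.
Proof.
move=> a0 q1 h0; rewrite lt_min => /andP[h1 ha].
have hq : h ^+ q <= h.
  by rewrite -(subnK q1) exprD expr1 ler_piMl ?exprn_ile1 ?ltW.
apply: le_trans (ler_wpM2l a0 hq) _; apply: le_trans (ler_wpM2l a0 (ltW ha)) _.
have a1 : 0 < 2 * a + 1 by lra.
by rewrite ler_pdivrMr //; lra.
Qed.

Theorem proposition3p3 (R : realType) (d : nat) (Om : set 'rV[R]_d) (q : nat)
  (lam : R) (k : 'rV[R]_d -> 'rV[R]_d -> R)
  (N : R -> nat) (y : forall h : R, 'I_(N h) -> 'rV[R]_d)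
  (w : forall h : R, 'I_(N h) -> R) :
  open Om -> bounded_set Om -> (1 <= q)%N -> lam != 0 ->
  Cq q (prodset Om) (kfun2 k) ->
  not_in_spectrum Om k lam ->
  quad_scheme Om y -> quad_order Om q y w -> quad_stable w ->
  exists h0 : R, 0 < h0 /\ exists kappa : R, exists C : R, 0 < C /\
    forall h : R, 0 < h < h0 ->
      sysmx k lam y w h \in unitmx /\
      cond_inf (sysmx k lam y w h) <= kappa /\
      forall f u : 'rV[R]_d -> R,
        Cq q Om f -> (exists x, closure Om x /\ f x != 0) ->
        Cq q Om u -> (forall x, closure Om x -> lam * u x - Kop Om k u x = f x) ->
        (exists! uh : 'I_(N h) -> R, forall i : 'I_(N h),
            lam * uh i - \sum_(j < N h) w h j * k (y h i) (y h j) * uh j = f (y h i)) /\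
        (forall uh : 'I_(N h) -> R,
          (forall i : 'I_(N h),
            lam * uh i - \sum_(j < N h) w h j * k (y h i) (y h j) * uh j = f (y h i)) ->
          supnorm Om (fun x => u x - nystrom k lam y w f uh x)
            <= C * h ^+ q * Cq_norm q Om u).
Proof.
move=> Oop bOm q1 lam0 Ck /not_in_spectrum_bound[M M0 KM] [y_cl _] [Cw quad].
move=> /quad_stable_bound[CQ CQ0 wB].
have [Bk Bk0 kB] := exists_kernel_bound Oop bOm Ck.
set a := M * nystrom_residual_const d q lam Bk CQ Cw.
have a0 : 0 <= a by rewrite mulr_ge0 ?mulr_ge0 ?sum_inv_mfact_ge0 ?invr_ge0.
exists (Num.min 1 (2 * a + 1)^-1); split.
  by rewrite lt_min ltr01 invr_gt0; lra.
exists ((`|lam| + CQ * Bk) * nystrom_stab_const lam Bk CQ M).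
exists (nystrom_error_const d q lam Bk CQ Cw M + 1); split => [|h /andP[h0 hh0]].
  by rewrite ltr_pwDr // (nystrom_error_const_ge0 _ _ _ _ _ _ _ Bk0 CQ0 M0).
have [Au cond sol] := nystrom_small_step d q Om lam k N y w Oop bOm lam0 Bk CQ Cw M h Bk0 kB CQ0
  (wB h h0) (quad h h0) (y_cl h h0) M0 KM h0 (small_step_le a0 q1 h0 hh0).
split=> // ; split=> // f u _ _ Cu uf; have [uh_ex uh_err] := sol f u Cu uf.
split=> // uh uhf; apply: le_trans (uh_err uh uhf) _.
apply: ler_wpM2r; first exact: Cq_norm_ge0.
by apply: ler_wpM2r; [rewrite exprn_ge0 ?ltW|lra].
Qed.
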